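(* Let $\mathcal{C}$ be a unital complex algebra, $A,B\subseteq\mathcal{C}$ subalgebras with $\mathbf{1}_{\mathcal{C}}\in B$, $\rho:A\to B$ and $\psi:B\to A$ linear maps, and $\mathfrak{e}:\mathcal{C}\to\mathcal{C}$ a linear map such that $(A,B)$ is right-liberated with respect to $(\mathfrak{e},\rho,\psi)$. Then for every $\ell\ge0$ and every $x=(b_0,a_1,b_1,\dots,a_\ell,b_\ell)\in\mathcal{W}_\ell$, \[ \mathfrak{e}\big[b_0a_1b_1\cdots a_\ell b_\ell\big]=\mathcal{M}(x)\,\mathfrak{e}[\mathbf{1}]. \]
   Context: $(A,B)$ is right-liberated with respect to $(\mathfrak e,\rho,\psi)$ if $\mathfrak e$ is a $B$-bimodule map ($\mathfrak e[b_1yb_2]=b_1\mathfrak e[y]b_2$ for $b_1,b_2\in B$, $y\in\mathcal C$) and for every $n\ge1$, $a_1,\dots,a_n\in A$, $b_1,\dots,b_{n-1}\in B$: $\mathfrak e\big[(a_1-\rho(a_1))(b_1-\psi(b_1))(a_2-\rho(a_2))\cdots(b_{n-1}-\psi(b_{n-1}))(a_n-\rho(a_n))\big]=0.$ Moment function: $\mathcal W_\ell$ is the set of tuples $(b_0,a_1,b_1,\dots,a_\ell,b_\ell)$ with $a_i\in A$, $b_i\in B$ (so $\mathcal W_0=B$). For $m\ge1$ let $[m]=\{1,\dots,m\}$, $2[m]=\{2,4,\dots,2m\}$, $2[0]=\emptyset$. For $\ell\ge1$ and $S\subseteq[2\ell-1]$, let $T_0,\dots,T_m$ be the maximal runs of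 consecutive integers in $S\cup\{0,2\ell\}$ and $U_1,\dots,U_m$ the maximal runs of consecutive integers in $[2\ell-1]\setminus S$, listed so that $T_0<U_1<T_1<\dots<U_m<T_m$; $m=:\mathrm{Alt}(S)$. For $w=(b_0,a_1,\dots,a_\ell,b_\ell)$ set, for $j\in S\cup\{0,2\ell\}$, $x_j=\rho(a_{(j+1)/2})$ if $j$ odd, $x_j=b_{j/2}$ if $j$ even; and for $k\in[2\ell-1]\setminus S$, $y_k=a_{(k+1)/2}$ if $k$ odd, $y_k=\psi(b_{k/2})$ if $k$ even. Define $\mathrm{Col}(w;S)=\big(\prod_{j\in T_0}x_j,\prod_{k\in U_1}y_k,\prod_{j\in T_1}x_j,\dots,\prod_{k\in U_m}y_k,\prod_{j\in T_m}x_j\big)\in\mathcal W_{m}$, products taken in increasing order of index. Define $\mathcal M:\bigcup_\ell\mathcal W_\ell\to B$ recursively by $\mathcal M(b)=b$ for $b\in\mathcal W_0$ and, for $x\in\mathcal W_\ell$, $\ell\ge1$, $\mathcal M(x)=\sum_{S\subseteq[2\ell-1],\,S\neq 2[\ell-1]}(-1)^{\ell+|S|}\mathcal M(\mathrm{Col}(x;S))$ (each such $S$ has $\mathrm{Alt}(S)<\ell$). *)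

From HB Require Import structures.
From mathcomp Require Import all_boot all_order all_algebra.
Set Implicit Arguments. Unset Strict Implicit. Unset Printing Implicit Defensive.
Import Order.TTheory GRing.Theory Num.Theory.
Local Open Scope ring_scope.

Section Defs.
Variables (K : numClosedFieldType) (C : algType K).

Definition is_subalgebra (S : {pred C}) : Prop :=
  [/\ 0 \in S,
      (forall (k : K) x y, x \in S -> y \in S -> k *: x + y \in S)
    & (forall x y, x \in S -> y \in S -> x * y \in S)].

Definition linear_map_on (S T : {pred C}) (f : C -> C) : Prop :=
  (forall x, x \in S -> f x \in T) /\
  (forall (k : K) x y, x \in S -> y \in S -> f (k *: x + y) = k *: f x + f y).

Definition is_linear (f : C -> C) : Prop :=
  forall (k : K) x y, f (k *: x + y) = k *: f x + f y.

(* Right-liberation of (A,B) w.r.t. (e, rho, psi).  A tuple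
   a_1, b_1, a_2, ..., b_{n-1}, a_n  (n >= 1) is represented by
   a1 together with the list [(b_1,a_2); ...; (b_{n-1},a_n)]. *)
Definition right_liberated (A B : {pred C}) (e rho psi : C -> C) : Prop :=
  (forall b1 b2 y, b1 \in B -> b2 \in B -> e (b1 * y * b2) = b1 * e y * b2) /\
  (forall (a1 : C) (s : seq (C * C)),
      a1 \in A -> all (fun p => (p.1 \in B) && (p.2 \in A)) s ->
      e ((a1 - rho a1) * \prod_(p <- s) ((p.1 - psi p.1) * (p.2 - rho p.2))) = 0).

(* A word (b_0, a_1, b_1, ..., a_l, b_l) in W_l is represented by
   (b_0, [(a_1,b_1); ...; (a_l,b_l)]); l = size x.2. *)
Definition word := (C * seq (C * C))%type.

Definition flat (x : word) : seq C :=
  x.1 :: flatten [seq [:: p.1; p.2] | p <- x.2].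

Fixpoint pairs (s : seq C) : seq (C * C) :=
  match s with
  | a :: b :: r => (a, b) :: pairs r
  | _ => [::]
  end.

Definition unflat (s : seq C) : word := (head 0 s, pairs (behead s)).

Fixpoint runs (s : seq (bool * C)) : seq (bool * C) :=
  match s with
  | [::] => [::]
  | (t, c) :: s' =>
      match runs s' with
      | (t', c') :: r => if t == t' then (t, c * c') :: r
                         else (t, c) :: (t', c') :: r
      | [::] => [:: (t, c)]
      end
  end.

(* Col(x;S): index j in [0,2l] is in T := S u {0,2l} (tag true) or in
   [2l-1] \ S (tag false); x_j / y_k as in the paper. *)
Definition Col (rho psi : C -> C) (x : word) (l : nat)
    (S : {set 'I_(2 * l).+1}) : word :=
  let z := flat x in
  let inT (j : 'I_(2 * l).+1) :=
      (j \in S) || (val j == 0%N) || (val j == (2 * l)%N) in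
  let v (j : 'I_(2 * l).+1) :=
      if inT j then (if odd j then rho (nth 0 z j) else nth 0 z j)
      else (if odd j then nth 0 z j else psi (nth 0 z j)) in
  unflat [seq c.2 | c <- runs [seq (inT j, v j) | j <- enum 'I_(2 * l).+1]].

Definition admissible (l : nat) (S : {set 'I_(2 * l).+1}) : bool :=
  [forall j : 'I_(2 * l).+1, (j \in S) ==> (0 < val j < 2 * l)%N] &&
  (S != [set j : 'I_(2 * l).+1 | (0 < val j < 2 * l)%N && ~~ odd j]).

Fixpoint Mfuel (rho psi : C -> C) (n : nat) (x : word) : C :=
  match n with
  | 0 => x.1
  | n'.+1 =>
      if x.2 is [::] then x.1
      else \sum_(S : {set 'I_(2 * size x.2).+1} | admissible S)
             (-1) ^+ (size x.2 + #|S|) * Mfuel rho psi n' (Col rho psi x S)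
  end.

Definition Moment (rho psi : C -> C) (x : word) : C :=
  Mfuel rho psi (size x.2) x.

End Defs.

From HB Require Import structures.
From mathcomp Require Import all_boot all_order all_algebra zify.
Set Implicit Arguments. Unset Strict Implicit. Unset Printing Implicit Defensive.
Import GRing.Theory.
Local Open Scope ring_scope.

(* Write z_0, ..., z_2l for the letters of x
   and centre every interior letter: z_j - rho(z_j) for odd j, z_j - psi(z_j)
   for even j.  Since e is a B-bimodule map, b_0 and b_l can be pulled out,
   and right-liberation says that e kills the product of the centred letters.
   Expanding this product gives one term per subset S of [2l-1]: position j
   contributes x_j if j lies in T = S u {0, 2l} and y_j otherwise, with the
   sign (-1)^(l + |S| + 1).  The term of S = 2[l-1] is the product of x itself;
   every other term is the product of the strictly shorter word Col(x;S), to
   which the induction hypothesis applies.  This is exactly the recursion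
   defining M. *)

Section Runs.
Variables (K : numClosedFieldType) (C : algType K) (A B : {pred C}).
Hypothesis mulA : forall x y, x \in A -> y \in A -> x * y \in A.
Hypothesis mulB : forall x y, x \in B -> y \in B -> x * y \in B.

Fixpoint alternating (b : bool) (s : seq bool) : bool :=
  if s is t :: s' then (t == b) && alternating (~~ b) s' else true.

Fixpoint graded (b : bool) (s : seq C) : bool :=
  if s is c :: s' then (if b then c \in B else c \in A) && graded (~~ b) s'
  else true.

Definition tag_mem (c : bool * C) : bool := if c.1 then c.2 \in B else c.2 \in A.

Lemma runs_cons (s : seq (bool * C)) t (c : C) : runs ((t, c) :: s) =
  match runs s with
  | (t', c') :: r => if t == t' then (t, c * c') :: r else (t, c) :: (t', c') :: r
  | [::] => [:: (t, c)]
  end.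
Proof. by []. Qed.

Lemma runs_alternating (s : seq (bool * C)) t (c : C) :
  alternating t (map fst (runs ((t, c) :: s))).
Proof.
elim: s t c => [|[t' c'] s IH] t c; first by rewrite /= eqxx.
rewrite runs_cons; have := IH t' c'.
case: (runs ((t', c') :: s)) => [|[t2 c2] r] //=; first by rewrite eqxx.
case/andP => /eqP -> H.
case: eqP => [->|ne] /=; first by rewrite eqxx.
have Et : t' = ~~ t by move: ne; case: (t); case: (t') => //= /(_ erefl).
by move: H; rewrite Et negbK => H; rewrite !eqxx H.
Qed.

Lemma runs_last (s : seq (bool * C)) t (c : C) d :
  last d (map fst (runs ((t, c) :: s))) = last t (map fst s).
Proof.
elim: s t c d => [|[t' c'] s IH] t c d //.
rewrite runs_cons; have := IH t' c'.
case: (runs ((t', c') :: s)) => [|[t2 c2] r] /= H.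
  by have := H true; rewrite -(H false).
by case: ifP => [/eqP ->|_] /=; rewrite (H t2).
Qed.

Lemma runs_prod (s : seq (bool * C)) :
  \prod_(c <- [seq c.2 | c <- runs s]) c = \prod_(c <- [seq c.2 | c <- s]) c.
Proof.
elim: s => [|[t c] s IH] //.
rewrite runs_cons [in RHS]map_cons big_cons -IH.
case: (runs s) => [|[t2 c2] r]; first by rewrite /= !big_cons !big_nil.
by case: ifP => _; rewrite /= !big_cons ?mulrA.
Qed.

Lemma runs_tag_mem (s : seq (bool * C)) : all tag_mem s -> all tag_mem (runs s).
Proof.
elim: s => [|[t c] s IH] //; rewrite runs_cons /= => /andP[tc /IH].
case: (runs s) => [|[t2 c2] r] /=; first by rewrite tc.
case/andP => tc2 Hr; case: ifP => [/eqP Et|_] /=; last by rewrite tc tc2 Hr.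
by move: tc tc2; rewrite /tag_mem /= -Et Hr andbT; case: t {Et} => /= ? ?; auto.
Qed.

Lemma runs_size (s : seq (bool * C)) : runs s = s \/ (size (runs s) < size s)%N.
Proof.
elim: s => [|[t c] s IH]; first by left.
rewrite runs_cons; case: IH => [E|lt].
  rewrite E; case: s E => [|[t2 c2] r] E /=; first by left.
  by case: ifP => _; [right|left].
right; move: lt; case: (runs s) => [|[t2 c2] r] /=.
  by case: s.
by case: ifP => _ /=; lia.
Qed.

Lemma alternating_graded b (s : seq (bool * C)) :
  alternating b (map fst s) -> all tag_mem s -> graded b (map snd s).
Proof.
elim: s b => [|[t c] s IH] b //= /andP[/eqP Et H] /andP[tc H']; subst b.
by rewrite IH // andbT; move: tc; rewrite /tag_mem /=.
Qed.

Lemma alternating_nth b s j : alternating b s -> (j < size s)%N ->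
  nth false s j = b (+) odd j.
Proof.
elim: s b j => [|t s IH] b [|j] //= /andP[/eqP Et H] lt; first by rewrite addbF.
by rewrite (IH _ _ H lt) addNb addbN.
Qed.

Lemma alternating_last b s : alternating b s ->
  last (~~ b) s = if odd (size s) then b else ~~ b.
Proof.
elim: s b => [|t s IH] b //= /andP[/eqP -> H].
by move: (IH _ H); rewrite negbK => ->; case: (odd (size s)).
Qed.

Lemma graded_nth b s j : graded b s -> (j < size s)%N ->
  if b (+) odd j then nth 0 s j \in B else nth 0 s j \in A.
Proof.
elim: s b j => [|t s IH] b [|j] //= /andP[H1 H2] lt; first by rewrite addbF.
by have := IH _ _ H2 lt; rewrite addNb addbN.
Qed.

Lemma pairs_ind (P : seq C -> Prop) : P [::] -> (forall a, P [:: a]) ->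
  (forall a b s, P s -> P (a :: b :: s)) -> forall s, P s.
Proof.
move=> P0 P1 P2 s; have [n] := ubnP (size s).
elim: n s => [|n IH] [|a [|b s]] //= lt.
by apply: P2; apply: IH; rewrite /= in lt; lia.
Qed.

Lemma pairs_graded s : graded false s ->
  all (fun p => (p.1 \in A) && (p.2 \in B)) (pairs s).
Proof. by elim/pairs_ind: s => //= a b s IH /andP[-> /andP[-> /IH]]. Qed.

Lemma pairs_prod (s : seq C) : ~~ odd (size s) ->
  \prod_(p <- pairs s) (p.1 * p.2) = \prod_(c <- s) c.
Proof.
elim/pairs_ind: s => [|a|a b s IH] /=; [by rewrite !big_nil | by [] | ].
by rewrite negbK => /IH; rewrite !big_cons => ->; rewrite mulrA.
Qed.

Lemma pairs_size (s : seq C) : ((size (pairs s)).*2 <= size s)%N.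
Proof. by elim/pairs_ind: s => //= a b s IH; rewrite doubleS; lia. Qed.

Lemma runs_word (s : seq (bool * C)) c0 s' :
  s = (true, c0) :: s' -> last true (map fst s') -> all tag_mem s ->
  let y := unflat [seq c.2 | c <- runs s] in
  [/\ y.1 \in B, all (fun p => (p.1 \in A) && (p.2 \in B)) y.2,
      y.1 * \prod_(p <- y.2) (p.1 * p.2) = \prod_(c <- [seq c.2 | c <- s]) c
    & runs s = s \/ ((size y.2).*2.+2 <= size s)%N].
Proof.
move=> Es hl htm /=.
have ha := runs_alternating s' true c0; have hl2 := runs_last s' true c0 false.
have ht := runs_tag_mem htm; have hs := runs_size s; have hp := runs_prod s.
rewrite -Es in ha hl2; rewrite hl in hl2.
move: ha hl2 ht hs hp; case: (runs s) => [|[t1 h] rs] //=.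
case/andP => /eqP -> ha hl2 /andP[th ht] hs hp.
have hal : alternating true [seq i.1 | i <- (true, h) :: rs] by rewrite /= ha.
have := alternating_last hal; rewrite /= hl2 size_map /=.
case Ho: (odd (size rs)) => //= _.
split => //.
- exact/pairs_graded/(alternating_graded ha).
- by rewrite pairs_prod ?size_map ?Ho // -hp big_cons.
- case: hs => [->|lt]; [by left|right].
  have := pairs_size [seq c.2 | c <- rs]; rewrite size_map /= in lt *; lia.
Qed.

End Runs.

Section Collapse.
Variables (K : numClosedFieldType) (C : algType K) (A B : {pred C}) (rho psi : C -> C).
Hypothesis mulA : forall x y, x \in A -> y \in A -> x * y \in A.
Hypothesis mulB : forall x y, x \in B -> y \in B -> x * y \in B.
Hypothesis rhoAB : forall x, x \in A -> rho x \in B.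
Hypothesis psiBA : forall x, x \in B -> psi x \in A.

Definition in_W (x : word C) : bool :=
  (x.1 \in B) && all (fun p => (p.1 \in A) && (p.2 \in B)) x.2.

Lemma flat_graded (x : word C) : in_W x -> graded A B true (flat x).
Proof.
case: x => b s /andP[/= -> /=]; elim: s => [|[a b'] s IH] //=.
by case/andP => /andP[/= -> ->] /IH.
Qed.

Lemma flat_size (x : word C) : size (flat x) = (2 * size x.2).+1.
Proof.
case: x => b s; rewrite /flat /=; congr S.
by elim: s => [|p s IH] //=; rewrite IH; lia.
Qed.

Lemma flat_prod (x : word C) : x.1 * \prod_(p <- x.2) (p.1 * p.2) =
   \prod_(j < (2 * size x.2).+1) nth 0 (flat x) j.
Proof.
rewrite -flat_size -(big_mkord xpredT (fun j => nth 0 (flat x) j)).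
rewrite -(@big_nth _ _ _ _ 0 (flat x) xpredT (fun c => c)).
case: x => b s; rewrite /flat /= big_cons; congr (_ * _).
by elim: s => [|p s IH]; rewrite ?big_nil //= !big_cons IH mulrA.
Qed.

Definition letter (z : seq C) (j : nat) (c : bool) : C :=
  if c then (if odd j then rho (nth 0 z j) else nth 0 z j)
  else (if odd j then nth 0 z j else psi (nth 0 z j)).

Definition kept (l : nat) (S : {set 'I_(2 * l).+1}) (j : 'I_(2 * l).+1) : bool :=
  (j \in S) || (val j == 0%N) || (val j == (2 * l)%N).

Definition col_list (x : word C) (l : nat) (S : {set 'I_(2 * l).+1}) :=
  [seq (kept S j, letter (flat x) j (kept S j)) | j <- enum 'I_(2 * l).+1].

Lemma Col_runs (x : word C) l (S : {set 'I_(2 * l).+1}) :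
  Col rho psi x S = unflat [seq c.2 | c <- runs (col_list x S)].
Proof. by []. Qed.

Lemma letter_tag_mem z j c : graded A B true z -> (j < size z)%N ->
  tag_mem A B (c, letter z j c).
Proof.
move=> g lt; have := graded_nth g lt; rewrite /tag_mem /letter /=.
by case: c; case: (odd j) => /=; auto.
Qed.

Section ColList.
Variables (x : word C) (S : {set 'I_(2 * size x.2).+1}).
Let l := size x.2.

Lemma col_list_size : size (col_list x S) = (2 * l).+1.
Proof. by rewrite size_map size_enum_ord. Qed.

Lemma col_list_tag d (j : 'I_(2 * l).+1) :
  nth d (map fst (col_list x S)) j = kept S j.
Proof.
rewrite (nth_map (true, 0)) ?col_list_size ?ltn_ord //.
by rewrite (nth_map ord0) ?size_enum_ord ?ltn_ord // nth_ord_enum.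
Qed.

Lemma col_list_ends : exists c0 s',
  col_list x S = (true, c0) :: s' /\ last true (map fst s').
Proof.
have [c0 [s' Es]] : exists c0 s', col_list x S = (true, c0) :: s'.
  by rewrite /col_list enum_ordSl /= /kept eqxx orbT /=; do 2 eexists.
exists c0, s'; split => //.
rewrite (last_nth true) -[true :: _]/(map fst ((true, c0) :: s')) -Es.
have -> : size [seq i.1 | i <- s'] = val (@ord_max (2 * l)).
  by have := col_list_size; rewrite Es size_map /=; case.
by rewrite col_list_tag /kept /= eqxx !orbT.
Qed.

Lemma col_list_tag_mem : in_W x -> all (tag_mem A B) (col_list x S).
Proof.
move=> /flat_graded gz; apply/allP => c /mapP [j _ ->].
by apply: letter_tag_mem => //; rewrite flat_size ltn_ord.
Qed.

Lemma col_list_prod : \prod_(c <- [seq c.2 | c <- col_list x S]) c =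
  \prod_(j < (2 * l).+1) letter (flat x) j (kept S j).
Proof.
by rewrite big_map big_map -deprecated_filter_index_enum big_filter.
Qed.

End ColList.

Lemma Col_word (x : word C) (S : {set 'I_(2 * size x.2).+1}) : in_W x ->
  let y := Col rho psi x S in
  in_W y /\ y.1 * \prod_(p <- y.2) (p.1 * p.2) =
            \prod_(j < (2 * size x.2).+1) letter (flat x) j (kept S j).
Proof.
move=> inx /=; have [c0 [s' [Es hl]]] := col_list_ends S.
have [h1 h2 h3 _] := runs_word mulA mulB Es hl (col_list_tag_mem S inx).
by rewrite Col_runs /in_W h1 h2 h3 col_list_prod.
Qed.

(* For admissible S the word Col(x;S) is strictly shorter than x: if no
   runs merged, the tags alternate, which forces S = 2[l-1]. *)
Lemma Col_size (x : word C) (S : {set 'I_(2 * size x.2).+1}) :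
  in_W x -> admissible S -> (size (Col rho psi x S).2 < size x.2)%N.
Proof.
move=> inx /andP[/forallP Sint /eqP nS]; set l := size x.2 in S Sint nS *.
have [c0 [s' [Es hl]]] := col_list_ends S.
have [_ _ _ [Er|]] := runs_word mulA mulB Es hl (col_list_tag_mem S inx);
  last by move=> lt; rewrite Col_runs; rewrite col_list_size in lt; rewrite /l; lia.
Show.
exfalso; apply: nS.
have ha := runs_alternating s' true c0; rewrite -Es Er in ha.
have kept_even (j : 'I_(2 * l).+1) : kept S j = ~~ odd j.
  rewrite -(col_list_tag S false) (alternating_nth ha) //.
  by rewrite size_map col_list_size ltn_ord.
apply/setP => j; rewrite inE; have := kept_even j; have := Sint j; rewrite /kept.
have E : ((nat_of_ord j == 0%N) || (nat_of_ord j == 2 * l)%N) = ~~ (0 < j < 2 * l)%N.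
  have jl := ltn_ord j; apply/idP/idP; first by case/orP => /eqP H; apply/negP; lia.
  by move=> H; apply/orP; lia.
case: (j \in S) => /=; first by move=> -> <-.
by move=> _; rewrite E; case: (0 < j < 2 * l)%N => //= <-.
Qed.

End Collapse.

(* Distributivity over a family of binary choices, in any (noncommutative)
   ring: positions outside P have a single choice (true), and a term of the
   expansion is determined by the set S of positions of P choosing true. *)
Lemma prod_sum_subsets (R : pzRingType) (I : finType) (P : pred I)
    (f : I -> bool -> R) :
  \prod_i \sum_(c : bool | P i || c) f i c =
  \sum_(S : {set I} | S \subset P) \prod_i f i ((i \in S) || ~~ P i).
Proof.
rewrite (big_distr_big_dep true) /=.
pose choice (S : {set I}) := [ffun i => (i \in S) || ~~ P i].
pose support (g : {ffun I -> bool}) := [set i | g i && P i].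
have supportK (S : {set I}) : S \subset P -> support (choice S) = S.
  move=> /subsetP sSP; apply/setP => i; rewrite !inE ffunE.
  by case: (boolP (i \in S)) => [/sSP | _] //=; rewrite ?andNb // unfold_in.
have choiceK (g : {ffun I -> bool}) :
    g \in pfamily true predT (fun i => [pred c | P i || c]) ->
    choice (support g) = g.
  move=> /pfamilyP[_ gP]; apply/ffunP => i; rewrite ffunE inE.
  by have := gP i isT; rewrite inE; case: (P i) (g i) => [] [].
rewrite (reindex_onto choice support) /=; last first.
  by move=> g; rewrite unfold_in => /choiceK.
apply: eq_big => [S | S _]; last by apply: eq_bigr => i _; rewrite ffunE.
apply/idP/idP => [/andP[_ /eqP <-] | sSP].
  by apply/subsetP => i; rewrite inE => /andP[_]; rewrite unfold_in.
rewrite supportK // eqxx andbT; apply/pfamilyP; split => [|i _].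
  by apply/subsetP.
by rewrite unfold_in ffunE; case: (P i); rewrite ?orbT.
Qed.

Lemma prod_sign (R : pzRingType) k (a : 'I_k -> nat) (w : 'I_k -> R) :
  \prod_(i < k) ((-1) ^+ a i * w i) = (-1) ^+ (\sum_(i < k) a i)%N * \prod_(i < k) w i.
Proof.
elim: k a w => [|k IH] a w; first by rewrite !big_ord0 expr0 mul1r.
rewrite !big_ord_recr /= IH exprD -!mulrA; congr (_ * _).
by rewrite !mulrA (commr_sign (\prod_(i < k) w (widen_ord (leqnSn k) i))).
Qed.

Lemma prod_pairs (R : pzSemiRingType) (f : nat -> R) m :
  \prod_(0 <= j < 2 * m) f j = \prod_(0 <= i < m) (f (2 * i)%N * f (2 * i).+1).
Proof.
elim: m => [|m IH]; first by rewrite !big_geq.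
by rewrite mulnS add2n !big_nat_recr //= -?IH ?mulrA //; lia.
Qed.

Section Liberation.
Variables (K : numClosedFieldType) (C : algType K) (A B : {pred C}) (rho psi e : C -> C).
Hypothesis subalgA : is_subalgebra A.
Hypothesis subalgB : is_subalgebra B.
Hypothesis oneB : 1 \in B.
Hypothesis linrho : linear_map_on A B rho.
Hypothesis linpsi : linear_map_on B A psi.
Hypothesis line : is_linear e.
Hypothesis liberated : right_liberated A B e rho psi.

Lemma memA_mul x y : x \in A -> y \in A -> x * y \in A.
Proof. by case: subalgA => _ _; apply. Qed.

Lemma memB_mul x y : x \in B -> y \in B -> x * y \in B.
Proof. by case: subalgB => _ _; apply. Qed.

Lemma memB_rho x : x \in A -> rho x \in B.
Proof. by case: linrho => H _; apply: H. Qed.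

Lemma memA_psi x : x \in B -> psi x \in A.
Proof. by case: linpsi => H _; apply: H. Qed.

Lemma e0 : e 0 = 0.
Proof.
have h := line 1 0 0; rewrite scaler0 scale1r !addr0 in h.
by apply: (addrI (e 0)); rewrite addr0 -h.
Qed.

Lemma eD x y : e (x + y) = e x + e y.
Proof. by have := line 1 x y; rewrite !scale1r. Qed.

Lemma e_sum (I : Type) (r : seq I) (P : pred I) (F : I -> C) :
  e (\sum_(i <- r | P i) F i) = \sum_(i <- r | P i) e (F i).
Proof. exact: (big_morph e eD e0). Qed.

Lemma e_sign k x : e ((-1) ^+ k * x) = (-1) ^+ k * e x.
Proof.
rewrite -signr_odd; case: (odd k); rewrite ?expr0 ?mul1r // expr1 !mulN1r.
by have := line (-1) x 0; rewrite !scaleN1r addr0 e0 addr0.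
Qed.

Lemma e_bimod b1 y b2 : b1 \in B -> b2 \in B -> e (b1 * y * b2) = b1 * e y * b2.
Proof. by case: liberated => H _; apply: H. Qed.

(* The expansion step, for a flat sequence z_0, ..., z_{2l} with l = m + 1. *)
Section Expansion.
Variables (m : nat) (z : seq C).
Hypothesis size_z : size z = (2 * m.+1).+1.
Hypothesis graded_z : graded A B true z.

Definition interior (j : nat) : bool := (0 < j < 2 * m.+1)%N.

Definition centred (j : nat) : C :=
  if interior j then
    (if odd j then nth 0 z j - rho (nth 0 z j) else nth 0 z j - psi (nth 0 z j))
  else nth 0 z j.

Lemma z_mem j : (j < (2 * m.+1).+1)%N ->
  if odd j then nth 0 z j \in A else nth 0 z j \in B.
Proof. by rewrite -size_z => /(graded_nth graded_z); case: (odd j). Qed.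

(* Right-liberation, with the outer letters b_0 and b_l pulled out by the
   bimodule property: e kills the product of the centred letters. *)
Lemma e_centred_prod : e (\prod_(j < (2 * m.+1).+1) centred j) = 0.
Proof.
rewrite -(big_mkord xpredT) (_ : (2 * m.+1 = (2 * m).+2)%N); last lia.
rewrite big_nat_recl // big_nat_recr // big_nat_recl // prod_pairs.
set s := [seq (nth 0 z (2 * i).+2, nth 0 z (2 * i).+3) | i <- iota 0 m].
have -> : \prod_(0 <= i < m) (centred (2 * i).+2 * centred (2 * i).+3) =
    \prod_(p <- s) ((p.1 - psi p.1) * (p.2 - rho p.2)).
  rewrite big_map (_ : iota 0 m = index_iota 0 m); last by rewrite /index_iota subn0.
  by apply: eq_big_nat => i lti; rewrite /centred /interior /= oddM /= !ifT //; lia.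
rewrite (_ : centred 0 = nth 0 z 0) // (_ : centred (2 * m).+2 = nth 0 z (2 * m).+2);
  last by rewrite /centred /interior ifF //; lia.
rewrite (_ : centred 1 = nth 0 z 1 - rho (nth 0 z 1)); last first.
  by rewrite /centred /interior ifT //; lia.
rewrite mulrA e_bimod.
- case: liberated => _ ->; rewrite ?mulr0 ?mul0r //.
    by have := @z_mem 1; apply; lia.
  apply/allP => p /mapP [i]; rewrite mem_iota => /andP[_ lti] ->.
  have := @z_mem (2 * i).+2; have := @z_mem (2 * i).+3.
  by rewrite /= oddM /= => h3 h2; rewrite h2 ?h3 //; lia.
- by have := @z_mem 0; apply; lia.
- by have := @z_mem (2 * m).+2; rewrite /= oddM /=; apply; lia.
Qed.

Lemma boundary j : (j < (2 * m.+1).+1)%N ->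
  ~~ interior j = (j == 0%N) || (j == 2 * m.+1)%N.
Proof.
move=> lt; rewrite /interior; apply/idP/idP; first by move=> H; apply/orP; lia.
by case/orP => /eqP H; apply/negP; lia.
Qed.

Lemma boundary_even j : (j < (2 * m.+1).+1)%N -> ~~ interior j -> ~~ odd j.
Proof. by move=> lt; rewrite boundary // => /orP[/eqP -> | /eqP ->]; rewrite ?oddM. Qed.

Lemma kept_interior (S : {set 'I_(2 * m.+1).+1}) j :
  kept S j = (j \in S) || ~~ interior j.
Proof. by rewrite /kept -orbA boundary. Qed.

Definition sign_exp (j : nat) (c : bool) : nat := interior j && (odd j == c).

Definition signed_letter (j : nat) (c : bool) : C :=
  (-1) ^+ sign_exp j c * letter rho psi z j c.

Lemma centred_sum j : (j < (2 * m.+1).+1)%N ->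
  centred j = \sum_(c : bool | interior j || c) signed_letter j c.
Proof.
move=> lt; rewrite big_mkcond big_bool /= /signed_letter /sign_exp /centred /letter.
case: (interior j) (boundary_even lt) => /= [_ | /(_ isT) /negbTE ->].
  by case: (odd j) => /=; rewrite ?expr0 ?expr1 ?mul1r ?mulN1r // addrC.
by rewrite expr0 mul1r addr0.
Qed.

Definition interior_set (S : {set 'I_(2 * m.+1).+1}) : bool :=
  [forall j : 'I_(2 * m.+1).+1, (j \in S) ==> interior j].

Lemma expand_centred : \prod_(j < (2 * m.+1).+1) centred j =
  \sum_(S | interior_set S) \prod_(j < (2 * m.+1).+1) signed_letter j (kept S j).
Proof.
rewrite (eq_bigr _ (fun j _ => centred_sum (ltn_ord j))).
rewrite (prod_sum_subsets (fun j : 'I_(2 * m.+1).+1 => interior j)).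
apply: eq_big => [S | S _]; last by apply: eq_bigr => j _; rewrite kept_interior.
apply/subsetP/forallP => [sub j | sub j]; first by apply/implyP => /sub.
by move/(implyP (sub j)).
Qed.

Lemma sum_odd : (\sum_(j < (2 * m.+1).+1) odd j)%N = m.+1.
Proof.
rewrite -(big_mkord xpredT (fun j => (odd j : nat))).
elim: m.+1 => [|l IH]; first by rewrite muln0 big_nat1.
rewrite mulnS add2n big_nat_recr // big_nat_recr // IH /=.
have -> : odd (2 * l) = false by rewrite oddM.
by rewrite /= addn0 addn1.
Qed.

Lemma sum_interior : (\sum_(j < (2 * m.+1).+1) interior j)%N = (2 * m).+1.
Proof.
rewrite -(big_mkord xpredT (fun j => (interior j : nat))) big_nat_recr //=.
rewrite {2}/interior ltnn andbF addn0 (_ : (2 * m.+1 = (2 * m).+2)%N); last lia.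
rewrite big_nat_recl // {1}/interior /= add0n.
rewrite (eq_big_nat _ _ (F2 := fun _ => 1%N)); last first.
  by move=> i lti; rewrite /interior; apply/eqP; rewrite eqb1; apply/andP; split; lia.
by rewrite sum_nat_const_nat subn0 muln1.
Qed.

(* The sign of the term of S is (-1)^(l + |S| + 1): among the 2l - 1
   interior positions, the odd ones in S and the even ones outside S
   carry a minus sign. *)
Lemma sign_exp_parity (S : {set 'I_(2 * m.+1).+1}) : interior_set S ->
  odd (\sum_(j < (2 * m.+1).+1) sign_exp j (kept S j))%N = ~~ odd (m.+1 + #|S|).
Proof.
move=> /forallP Sint.
have count_j (j : 'I_(2 * m.+1).+1) :
    (sign_exp j (kept S j) + ((odd j : nat) + ((j \in S) : nat)) =
     (interior j : nat) + 2 * ((odd j && (j \in S)) : nat))%N.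
  have := Sint j; rewrite kept_interior /sign_exp.
  case: (boolP (interior j)) => [_ _ | /(boundary_even (ltn_ord j))].
    by rewrite orbF; case: (odd j); case: (j \in S).
  by rewrite implybF => /negbTE-> /negbTE->.
have : (\sum_(j < (2 * m.+1).+1) (sign_exp j (kept S j) + (odd j + (j \in S))) =
        \sum_(j < (2 * m.+1).+1) (interior j + 2 * (odd j && (j \in S))))%N.
  by apply: eq_bigr => j _; apply: count_j.
rewrite !big_split /= sum_odd sum_interior big1_eq.
have -> : (\sum_(i < (2 * m.+1).+1) (i \in S))%N = #|S|.
  by rewrite -sum1_card [RHS]big_mkcond; apply: eq_bigr => i _; case: (i \in S).
set X := (\sum_(i < _) sign_exp i _)%N; set Y := (\sum_(i < _) (odd i && _))%N.
move=> E; have /(congr1 odd) : (X + (m + #|S|) = 2 * (m + Y))%N by lia.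
by rewrite oddD oddM /= negbK; case: (odd X); case: (odd (m + #|S|)).
Qed.

Definition even_interior : {set 'I_(2 * m.+1).+1} :=
  [set j : 'I_(2 * m.+1).+1 | interior j && ~~ odd j].

Lemma kept_even_interior (j : 'I_(2 * m.+1).+1) : kept even_interior j = ~~ odd j.
Proof.
rewrite kept_interior inE; case: (boolP (interior j)) => /= [_ | bj].
  by rewrite orbF.
by apply/esym/(boundary_even (ltn_ord j)).
Qed.

(* The recursion of the moment function, on the level of e: the term of
   S = 2[l-1] in the expansion of the vanishing centred product is the
   product of the letters of x itself. *)
Lemma moment_step : e (\prod_(j < (2 * m.+1).+1) nth 0 z j) =
  \sum_(S | admissible S)
     (-1) ^+ (m.+1 + #|S|) * e (\prod_(j < (2 * m.+1).+1) letter rho psi z j (kept S j)).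
Proof.
have := e_centred_prod; rewrite expand_centred e_sum (bigD1 even_interior) /=;
  last by apply/forallP => j; apply/implyP; rewrite inE => /andP[].
have -> : \prod_(j < (2 * m.+1).+1) signed_letter j (kept even_interior j) =
          \prod_(j < (2 * m.+1).+1) nth 0 z j.
  apply: eq_bigr => j _; rewrite /signed_letter /sign_exp kept_even_interior /letter.
  by case: (odd j); rewrite /= andbF expr0 mul1r.
move/eqP; rewrite addr_eq0 => /eqP ->; rewrite -sumrN.
apply: eq_big => [S | S /andP[Sint _]]; first by [].
rewrite /signed_letter (prod_sign (fun j => sign_exp j (kept S j))) e_sign.
rewrite -signr_odd sign_exp_parity // -(signr_odd _ (m.+1 + #|S|)).
by case: (odd _); rewrite /= ?expr0 ?expr1 ?mulN1r ?mul1r ?opprK.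
Qed.

End Expansion.

Lemma e_letter b : b \in B -> e b = b * e 1.
Proof. by move=> bB; rewrite -[b]mulr1 -[b * 1]mulr1 e_bimod // !mulr1. Qed.

Lemma moment_fuel N (x : word C) : (size x.2 <= N)%N -> in_W A B x ->
  e (x.1 * \prod_(p <- x.2) (p.1 * p.2)) = Mfuel rho psi N x * e 1.
Proof.
elim: N x => [|N IH] [b0 [|p s]] //= size_x /[dup] inx /andP[/= b0B _];
  try by rewrite big_nil mulr1 e_letter.
rewrite (flat_prod (b0, p :: s)) (moment_step (flat_size (b0, p :: s)) (flat_graded inx)).
rewrite mulr_suml; apply: eq_bigr => S admS.
have [iny prod_y] := Col_word memA_mul memB_mul memB_rho memA_psi (x := (b0, p :: s)) S inx.
have := Col_size memA_mul memB_mul memB_rho memA_psi (x := (b0, p :: s)) inx admS.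
rewrite [size (b0, p :: s).2]/= => lt.
by rewrite -prod_y IH ?mulrA // -ltnS (leq_trans lt).
Qed.
End Liberation.

Unset Implicit Arguments.

Theorem theorem2p6 (K : numClosedFieldType) (C : algType K)
    (A B : {pred C}) (rho psi e : C -> C) :
  is_subalgebra A -> is_subalgebra B -> 1 \in B ->
  linear_map_on A B rho -> linear_map_on B A psi -> is_linear e ->
  right_liberated A B e rho psi ->
  forall x : word C,
    x.1 \in B -> all (fun p => (p.1 \in A) && (p.2 \in B)) x.2 ->
    e (x.1 * \prod_(p <- x.2) (p.1 * p.2)) = Moment rho psi x * e 1.
Proof.
move=> subalgA subalgB oneB linrho linpsi line liberated x x1B x2W.
have inx : in_W A B x by rewrite /in_W x1B.
exact (moment_fuel subalgA subalgB oneB linrho linpsi line liberated (leqnn _) inx).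
Qed.
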